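(* Let $\mathcal{A}\in\mathbb{R}^{n\times n\times n\times n}$ be a real CPS tensor that is not symmetric. Then $\mathcal{A}$ has a CPS decomposition of the form \[ \mathcal{A}=\sum_{i=1}^{R_1}\lambda_i\big(a_i\otimes a_i\otimes\bar a_i\otimes\bar a_i+\bar a_i\otimes\bar a_i\otimes a_i\otimes a_i\big)+\sum_{j=1}^{R_2}\mu_j\, b_j\otimes b_j\otimes b_j\otimes b_j, \] where $\lambda_i,\mu_j\in\mathbb{R}$, $a_i\in\mathbb{C}^n\setminus\mathbb{R}^n$ and $b_j\in\mathbb{R}^n$.
   Context: A tensor $\mathcal{A}\in\mathbb{C}^{n\times n\times n\times n}$ is conjugate partial-symmetric (CPS) if $\mathcal{A}_{ijkl}=\overline{\mathcal{A}_{klij}}$ and $\mathcal{A}_{ijkl}=\mathcal{A}_{jikl}=\mathcal{A}_{ijlk}$ for all indices; a real CPS tensor has real entries. A tensor is symmetric if its entries are invariant under all permutations of the four indices. A CPS decomposition is a representation $\sum_i\lambda_i a_i\otimes a_i\otimes\bar a_i\otimes\bar a_i$ with $\lambda_i\in\mathbb{R}$, $a_i\in\mathbb{C}^n$. *)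

From HB Require Import structures.
From mathcomp Require Import all_boot all_order all_algebra all_fingroup.
From mathcomp Require Import complex.
From mathcomp Require Import reals.
Set Implicit Arguments. Unset Strict Implicit. Unset Printing Implicit Defensive.
Import Order.TTheory GRing.Theory Num.Theory.
Local Open Scope ring_scope.

Definition tensor4 (T : Type) (n : nat) := 'I_n -> 'I_n -> 'I_n -> 'I_n -> T.

Section Defs.
Variable R : rcfType.
Variable n : nat.

Definition is_CPS (A : tensor4 R[i] n) : Prop :=
  forall i j k l,
    A i j k l = conjc (A k l i j) /\ A i j k l = A j i k l /\ A i j k l = A i j l k.

Definition is_real_tensor (A : tensor4 R[i] n) : Prop :=
  forall i j k l, Im (A i j k l) = 0.

Definition is_symmetric (A : tensor4 R[i] n) : Prop :=
  forall (s : 'S_4) (i j k l : 'I_n),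
    let t := [tuple i; j; k; l] in
    A i j k l = A (tnth t (s (inord 0))) (tnth t (s (inord 1)))
                  (tnth t (s (inord 2))) (tnth t (s (inord 3))).

Definition is_real_vec (a : 'I_n -> R[i]) : Prop := forall k, Im (a k) = 0.

Definition conjv (a : 'I_n -> R[i]) : 'I_n -> R[i] := fun k => conjc (a k).

Definition outer4 (a b c d : 'I_n -> R[i]) : tensor4 R[i] n :=
  fun i j k l => a i * b j * c k * d l.

End Defs.

From HB Require Import structures.
From mathcomp Require Import all_boot all_order all_algebra all_fingroup.
From mathcomp Require Import complex.
From mathcomp Require Import reals.
From mathcomp Require Import ring.
Import Order.TTheory GRing.Theory Num.Theory.
Local Open Scope ring_scope.
Set Implicit Arguments. Unset Strict Implicit.

(* With a = u + i w for
   real u, w, polarization gives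
     4 (u u w w + w w u u) = (u+w)^4 + (u-w)^4 - (a a a' a' + a' a' a a),
   and a real tensor with the symmetries of a real CPS tensor is a real
   combination of such u u w w + w w u u, taking u, w among e_i +- e_j.
   Terms with a real vector a are themselves fourth powers 2 a^4. *)

Section CPSDecomposition.
Variable R : realType.
Variable n : nat.
Local Notation C := (R[i]).
Local Notation realv b := (fun t => ((b t)%:C)%C).

Definition cps_decomposable (A : tensor4 C n) : Prop :=
  exists (R1 R2 : nat) (lam : 'I_R1 -> R) (a : 'I_R1 -> 'I_n -> C)
         (mu : 'I_R2 -> R) (b : 'I_R2 -> 'I_n -> R),
    (forall r, ~ is_real_vec (a r)) /\
    (forall i j k l : 'I_n,
      A i j k l =
        \sum_(r < R1) ((lam r)%:C)%C *
            (outer4 (a r) (a r) (conjv (a r)) (conjv (a r)) i j k l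
             + outer4 (conjv (a r)) (conjv (a r)) (a r) (a r) i j k l)
      + \sum_(s < R2) ((mu s)%:C)%C *
            outer4 (realv (b s)) (realv (b s)) (realv (b s)) (realv (b s)) i j k l).

Lemma eq_cps_decomposable (A B : tensor4 C n) :
  cps_decomposable A -> (forall i j k l, B i j k l = A i j k l) -> cps_decomposable B.
Proof.
move=> [R1 [R2 [lam [a [mu [b [a_nreal defA]]]]]]] eBA.
exists R1, R2, lam, a, mu, b.
by split=> // i j k l; rewrite eBA defA.
Qed.

Lemma cps_decomposable0 : cps_decomposable (fun _ _ _ _ => 0).
Proof.
exists 0%N, 0%N, (fun _ => 0), (fun _ _ => 0), (fun _ => 0), (fun _ _ => 0).
split; first by case.
by move=> *; rewrite !big_ord0 addr0.
Qed.

Lemma cps_decomposableD (A B : tensor4 C n) :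
  cps_decomposable A -> cps_decomposable B ->
  cps_decomposable (fun i j k l => A i j k l + B i j k l).
Proof.
move=> [R1 [R2 [lam [a [mu [b [a_nreal defA]]]]]]].
move=> [R1' [R2' [lam' [a' [mu' [b' [a'_nreal defB]]]]]]].
pose join (X : Type) m m' (f : 'I_m -> X) (g : 'I_m' -> X) (r : 'I_(m + m')) :=
  match split r with inl x => f x | inr y => g y end.
exists (R1 + R1')%N, (R2 + R2')%N, (join _ _ _ lam lam'), (join _ _ _ a a'),
  (join _ _ _ mu mu'), (join _ _ _ b b'); split.
  by move=> r; rewrite /join; case: (split r).
move=> i j k l; rewrite defA defB !big_split_ord /join.
have splitl m m' (x : 'I_m) : split (lshift m' x) = inl x := unsplitK (inl x).
have splitr m m' (x : 'I_m') : split (rshift m x) = inr x := unsplitK (inr x).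
under eq_bigr do rewrite splitl.
under [X in _ = _ + _ + (X + _)]eq_bigr do rewrite splitl.
under [X in _ = _ + _ + (_ + X)]eq_bigr do rewrite splitr.
under [X in _ = _ + X + _]eq_bigr do rewrite splitr.
rewrite /=; ring.
Qed.

Lemma cps_decomposable_sum (X : Type) (s : seq X) (F : X -> tensor4 C n) :
  (forall x, cps_decomposable (F x)) ->
  cps_decomposable (fun i j k l => \sum_(x <- s) F x i j k l).
Proof.
move=> decF; elim: s => [|x s IHs].
  by apply: (eq_cps_decomposable cps_decomposable0) => *; rewrite big_nil.
apply: (eq_cps_decomposable (cps_decomposableD (decF x) IHs)) => *.
by rewrite big_cons.
Qed.

Lemma cps_decomposable_sum_real (X : Type) (s : seq X) (F : X -> tensor4 R n) :
  (forall x, cps_decomposable (fun i j k l => ((F x i j k l)%:C)%C)) ->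
  cps_decomposable (fun i j k l => ((\sum_(x <- s) F x i j k l)%:C)%C).
Proof.
move=> decF; apply: (eq_cps_decomposable (cps_decomposable_sum s decF)) => *.
exact: rmorph_sum.
Qed.

Lemma cps_decomposable_power (c : R) (b : 'I_n -> R) :
  cps_decomposable (fun i j k l =>
    (c%:C)%C * outer4 (realv b) (realv b) (realv b) (realv b) i j k l).
Proof.
exists 0%N, 1%N, (fun _ => 0), (fun _ _ => 0), (fun _ => c), (fun _ => b).
split; first by case.
by move=> *; rewrite big_ord0 big_ord1 add0r.
Qed.

(* [Im] here is the imaginary part of a numClosedFieldType, not complex.Im. *)
Lemma complex_Im_eq0 (z : C) : Im z = 0 -> z = ((complex.Re z)%:C)%C.
Proof.
move/Creal_ImP; rewrite realE !lecE /=.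
by case: z => x y /= /orP[/andP[/eqP-> _]|/andP[/eqP<- _]].
Qed.

Lemma cps_decomposable_conj_pair (c : R) (a : 'I_n -> C) :
  cps_decomposable (fun i j k l => (c%:C)%C *
    (outer4 a a (conjv a) (conjv a) i j k l + outer4 (conjv a) (conjv a) a a i j k l)).
Proof.
have [/forallP a_real | a_nreal] := boolP [forall t, complex.Im (a t) == 0].
  have ea t : a t = ((complex.Re (a t))%:C)%C.
    by have := eqP (a_real t); case: (a t) => x y /= ->.
  apply: (eq_cps_decomposable (cps_decomposable_power (2 * c) (fun t => complex.Re (a t)))).
  move=> i j k l; rewrite /outer4 /conjv (ea i) (ea j) (ea k) (ea l) !conjc_real.
  by rewrite rmorphM /= rmorph_nat; ring.
exists 1%N, 0%N, (fun _ => c), (fun _ => a), (fun _ => 0), (fun _ _ => 0); split.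
  move=> _ a_real; move/forallP: a_nreal; apply=> t.
  by rewrite (complex_Im_eq0 (a_real t)).
by move=> *; rewrite big_ord0 big_ord1 addr0.
Qed.

Definition pair_outer (u w : 'I_n -> R) : tensor4 R n :=
  fun p q r s => u p * u q * w r * w s + w p * w q * u r * u s.

Lemma cps_decomposable_pair_outer (c : R) (u w : 'I_n -> R) :
  cps_decomposable (fun p q r s => ((c * pair_outer u w p q r s)%:C)%C).
Proof.
pose d := c / 4.
have -> : c = d * 4 by rewrite /d mulfVK // pnatr_eq0.
apply: (eq_cps_decomposable (cps_decomposableD
  (cps_decomposableD (cps_decomposable_power d (fun t => u t + w t))
                     (cps_decomposable_power d (fun t => u t - w t)))
  (cps_decomposable_conj_pair (- d) (fun t => ((u t)%:C)%C + 'i%C * ((w t)%:C)%C))))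
  => p q r s.
rewrite /pair_outer /outer4 /conjv /=; simpc.
by rewrite -complexr0; congr (Complex _ _); ring.
Qed.

Definition kdelta (i p : 'I_n) : R := (i == p)%:R.

Lemma sum_kdelta (G : 'I_n -> R) (a : 'I_n) : \sum_i G i * kdelta i a = G a.
Proof.
rewrite (bigD1 a) //= big1 => [|i /negbTE neq_ia].
  by rewrite /kdelta eqxx mulr1 addr0.
by rewrite /kdelta neq_ia mulr0.
Qed.

Lemma sum_kdelta4 (F : tensor4 R n) (a b c d : 'I_n) :
  \sum_i \sum_j \sum_k \sum_l
    F i j k l * (kdelta i a * kdelta j b * kdelta k c * kdelta l d) = F a b c d.
Proof.
rewrite -(sum_kdelta (fun i => F i b c d) a); apply: eq_bigr => i _.
rewrite -(sum_kdelta (fun j => F i j c d * kdelta i a) b); apply: eq_bigr => j _.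
rewrite -(sum_kdelta (fun k => F i j k d * kdelta i a * kdelta j b) c).
apply: eq_bigr => k _.
rewrite -(sum_kdelta (fun l => F i j k l * kdelta i a * kdelta j b * kdelta k c) d).
by apply: eq_bigr => l _; ring.
Qed.

(* The orbit of e_i e_j e_k e_l under the symmetries (12), (34), (13)(24)
   of a CPS tensor. *)
Definition sym_kdelta (i j k l p q r s : 'I_n) : R :=
  kdelta i p * kdelta j q * kdelta k r * kdelta l s
  + kdelta i q * kdelta j p * kdelta k r * kdelta l s
  + kdelta i p * kdelta j q * kdelta k s * kdelta l r
  + kdelta i q * kdelta j p * kdelta k s * kdelta l r
  + kdelta i r * kdelta j s * kdelta k p * kdelta l q
  + kdelta i s * kdelta j r * kdelta k p * kdelta l q
  + kdelta i r * kdelta j s * kdelta k q * kdelta l p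
  + kdelta i s * kdelta j r * kdelta k q * kdelta l p.

Lemma polarize_pair_outer (i j k l p q r s : 'I_n) :
  \sum_(x <- [:: 1; -1]) \sum_(y <- [:: 1; -1])
    x * y * pair_outer (fun t => kdelta i t + x * kdelta j t)
                       (fun t => kdelta k t + y * kdelta l t) p q r s
  = 4 * sym_kdelta i j k l p q r s.
Proof. by rewrite !big_cons !big_nil /pair_outer /sym_kdelta /=; ring. Qed.

Lemma sum_sym_kdelta (F : tensor4 R n) (p q r s : 'I_n) :
  \sum_i \sum_j \sum_k \sum_l F i j k l * sym_kdelta i j k l p q r s =
  F p q r s + F q p r s + F p q s r + F q p s r
  + F r s p q + F s r p q + F r s q p + F s r q p.
Proof.
rewrite -(sum_kdelta4 F p q r s) -(sum_kdelta4 F q p r s).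
rewrite -(sum_kdelta4 F p q s r) -(sum_kdelta4 F q p s r).
rewrite -(sum_kdelta4 F r s p q) -(sum_kdelta4 F s r p q).
rewrite -(sum_kdelta4 F r s q p) -(sum_kdelta4 F s r q p).
rewrite -!big_split; apply: eq_bigr => i _.
rewrite -!big_split; apply: eq_bigr => j _.
rewrite -!big_split; apply: eq_bigr => k _.
rewrite -!big_split; apply: eq_bigr => l _.
by rewrite /sym_kdelta /= !mulrDr.
Qed.

Section PairSymmetric.
Variable F : tensor4 R n.
Hypothesis F_sym12 : forall i j k l, F j i k l = F i j k l.
Hypothesis F_sym34 : forall i j k l, F i j l k = F i j k l.
Hypothesis F_swap : forall i j k l, F k l i j = F i j k l.

Lemma pair_outer_expansion (p q r s : 'I_n) :
  F p q r s =
  \sum_i \sum_j \sum_k \sum_l \sum_(x <- [:: 1; -1]) \sum_(y <- [:: 1; -1])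
    F i j k l * x * y / 32 *
      pair_outer (fun t => kdelta i t + x * kdelta j t)
                 (fun t => kdelta k t + y * kdelta l t) p q r s.
Proof.
have polarize i j k l :
    \sum_(x <- [:: 1; -1]) \sum_(y <- [:: 1; -1])
      F i j k l * x * y / 32 *
        pair_outer (fun t => kdelta i t + x * kdelta j t)
                   (fun t => kdelta k t + y * kdelta l t) p q r s
    = F i j k l * sym_kdelta i j k l p q r s / 8.
  have -> : sym_kdelta i j k l p q r s = (4 * sym_kdelta i j k l p q r s) / 4.
    by rewrite mulrC mulKf // pnatr_eq0.
  by rewrite -polarize_pair_outer !big_cons !big_nil /=; field.
transitivity ((\sum_i \sum_j \sum_k \sum_l F i j k l * sym_kdelta i j k l p q r s) / 8).
  rewrite sum_sym_kdelta.
  rewrite (F_sym34 q p r s) (F_sym34 p q r s) (F_sym12 p q r s).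
  rewrite (F_sym34 s r p q) (F_sym34 r s p q) (F_sym12 r s p q) (F_swap p q r s).
  by field.
rewrite mulr_suml; apply: eq_bigr => i _; rewrite mulr_suml; apply: eq_bigr => j _.
rewrite mulr_suml; apply: eq_bigr => k _; rewrite mulr_suml; apply: eq_bigr => l _.
by rewrite polarize.
Qed.

Lemma cps_decomposable_pair_symmetric :
  cps_decomposable (fun p q r s => ((F p q r s)%:C)%C).
Proof.
apply: eq_cps_decomposable; last first.
  by move=> p q r s; rewrite pair_outer_expansion.
do 4 apply: (cps_decomposable_sum_real (index_enum _)) => ?.
do 2 apply: (cps_decomposable_sum_real [:: 1; -1]) => ?.
exact: cps_decomposable_pair_outer.
Qed.

End PairSymmetric.

End CPSDecomposition.

Theorem corollary4p5 (R : realType) (n : nat) (A : tensor4 R[i] n) :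
  is_real_tensor A -> is_CPS A -> ~ is_symmetric A ->
  exists (R1 R2 : nat) (lam : 'I_R1 -> R) (a : 'I_R1 -> 'I_n -> R[i])
         (mu : 'I_R2 -> R) (b : 'I_R2 -> 'I_n -> R),
    (forall r, ~ is_real_vec (a r)) /\
    (forall i j k l : 'I_n,
      A i j k l =
        \sum_(r < R1) ((lam r)%:C)%C *
            (outer4 (a r) (a r) (conjv (a r)) (conjv (a r)) i j k l
             + outer4 (conjv (a r)) (conjv (a r)) (a r) (a r) i j k l)
      + \sum_(s < R2) ((mu s)%:C)%C *
            outer4 (fun t => ((b s t)%:C)%C) (fun t => ((b s t)%:C)%C)
                   (fun t => ((b s t)%:C)%C) (fun t => ((b s t)%:C)%C) i j k l).
Proof.
move=> A_real A_cps _.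
pose F i j k l := complex.Re (A i j k l).
have F_sym12 i j k l : F j i k l = F i j k l by rewrite /F (A_cps i j k l).2.1.
have F_sym34 i j k l : F i j l k = F i j k l by rewrite /F (A_cps i j k l).2.2.
have F_swap i j k l : F k l i j = F i j k l.
  by rewrite /F (A_cps i j k l).1; case: (A k l i j).
apply: (eq_cps_decomposable (cps_decomposable_pair_symmetric F_sym12 F_sym34 F_swap)).
by move=> i j k l; apply: complex_Im_eq0.
Qed.
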